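(* For every natural number $n\geq 2$, the $n$-Split Interval $S_n(I)$ is a Rosenthal compactum.
   Context: A Rosenthal compactum is a topological space homeomorphic to a compact subset of $\mathcal{B}_1(\mathbb{N}^{\mathbb{N}})$, the space of real-valued functions of the first Baire class on the Baire space $\mathbb{N}^{\mathbb{N}}$ (pointwise limits of sequences of continuous functions), endowed with the topology of pointwise convergence. Let $I=[0,1]$. For $n\geq 2$, $S_n(I)$ is the set $I\times\{0,\ldots,n-1\}$ with the topology in which the points $(x,i)$ with $i\in\{2,\ldots,n-1\}$ are isolated, a point $(x,0)$ with $x>0$ has basic neighbourhoods $\{(x,0)\}\cup\{(y,i): z_0<y<x,\ i\in\{0,\ldots,n-1\}\}$ for $z_0\in I$, $z_0<x$, a point $(x,1)$ with $x<1$ has basic neighbourhoods $\{(x,1)\}\cup\{(y,i): x<y<z_1,\ i\in\{0,\ldots,n-1\}\}$ for $z_1\in I$, $z_1>x$, and the points $(0,0)$ and $(1,1)$ are isolated. *)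

From HB Require Import structures.
From mathcomp Require Import all_boot all_order all_algebra.
From mathcomp Require Import all_classical all_reals.
From mathcomp Require Import topology normedtype.
Set Implicit Arguments. Unset Strict Implicit. Unset Printing Implicit Defensive.
Import Order.TTheory GRing.Theory Num.Theory.
Import numFieldNormedType.Exports.
Local Open Scope classical_set_scope.
Local Open Scope ring_scope.

Definition Iunit (R : realType) := {x : R | 0 <= x <= 1}.
HB.instance Definition _ (R : realType) := Choice.on (Iunit R).

Definition Split_carrier (R : realType) (n : nat) := (Iunit R * 'I_n)%type.
HB.instance Definition _ (R : realType) (n : nat) :=
  Choice.on (Split_carrier R n).

Definition Split_basic (R : realType) (n : nat) : set (set (Split_carrier R n)) :=
  fun A =>
    (exists (x : Iunit R) (i : 'I_n), (2 <= i)%N /\ A = [set (x, i)])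
 \/ (exists (x : Iunit R) (z0 : R), 0 < sval x /\ 0 <= z0 /\ z0 < sval x /\
       A = [set p | (p.1 = x /\ nat_of_ord p.2 = 0%N)
                    \/ (z0 < sval p.1 /\ sval p.1 < sval x)])
 \/ (exists (x : Iunit R) (z1 : R), sval x < 1 /\ z1 <= 1 /\ sval x < z1 /\
       A = [set p | (p.1 = x /\ nat_of_ord p.2 = 1%N)
                    \/ (sval x < sval p.1 /\ sval p.1 < z1)])
 \/ A = [set p | sval p.1 = 0 /\ nat_of_ord p.2 = 0%N]
 \/ A = [set p | sval p.1 = 1 /\ nat_of_ord p.2 = 1%N].

(** Since the
    basic sets form a base of neighbourhoods at every point (and are open in
    the described topology), this is exactly the topology of the paper. *)
HB.instance Definition _ (R : realType) (n : nat) :=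
  isSubBaseTopological.Build (Split_carrier R n) (@Split_basic R n) id.

Definition split_interval (R : realType) (n : nat) : topologicalType :=
  Split_carrier R n.

Definition baire_space : topologicalType := {ptws nat -> nat}.

Definition ptws_RBaire (R : realType) : topologicalType :=
  {ptws baire_space -> R}.

Definition baire_one (R : realType) : set (ptws_RBaire R) :=
  fun f => exists g : nat -> baire_space -> R,
    (forall k, continuous (g k)) /\
    (forall t : baire_space, (fun k => g k t) @ \oo --> (f t : R)).

Definition rosenthal_compactum (R : realType) (X : topologicalType) : Prop :=
  exists (K : set (ptws_RBaire R)) (f : X -> ptws_RBaire R),
    [/\ K `<=` @baire_one R, compact K, f @` setT = K &
       [/\ injective f, continuous f &
        (forall U : set X, open U ->
           exists V : set (ptws_RBaire R), open V /\ f @` U = V `&` K)]].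

From HB Require Import structures.
From mathcomp Require Import all_boot all_order all_algebra.
From mathcomp Require Import all_classical all_reals.
From mathcomp Require Import topology normedtype.
From mathcomp Require Import finmap ring lra zify.

(* Each point (x, i) of S_n(I) is sent to the function t |-> H_(x,i)(phi t) on the
   Baire space, where phi t = sum of 2^-(k+1) over the k with t k > 0 maps N^N onto
   [0,1] and H_(x,i) is 1 left of x, i at x and 0 right of x.  Since the first m
   digits of t locate phi t in a dyadic interval of length 2^-m, these functions
   are pointwise limits of functions depending on finitely many digits, hence of
   the first Baire class.  For fixed s the value H_(x,i)(s) is locally constant in
   (x, i), which gives continuity; conversely every basic open set of S_n(I) is
   cut out by conditions "H_(x,i)(s) = k" at points of N^N coding reals s, so the
   map is an embedding.  Compactness of S_n(I) follows from an ultrafilter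
   argument: the first coordinates converge to a cut x, and the ultrafilter
   converges to (x,0), (x,1) or to one of the points (x,i). *)

Set Implicit Arguments. Unset Strict Implicit. Unset Printing Implicit Defensive.
Import Order.TTheory GRing.Theory Num.Theory.
Import numFieldNormedType.Exports.
Local Open Scope classical_set_scope.
Local Open Scope ring_scope.

Lemma natr_window (F : realFieldType) (i k : nat) :
  (i%:R - 1/2 : F) < k%:R < (i%:R + 1/2 : F) -> k = i.
Proof.
move=> /andP [lt_ik lt_ki]; apply/eqP; rewrite eqn_leq.
by apply/andP; split; rewrite -ltnS -(ltr_nat F) -addn1 natrD; lra.
Qed.

Definition small_image (A B : Type) (f : A -> B) (U : set A) : set B :=
  [set b | forall a, f a = b -> U a].

Lemma image_small_image_interior (X Y : topologicalType) (f : X -> Y) (U : set X) :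
  (forall p, U p -> nbhs (f p) (small_image f U)) ->
  f @` U = (small_image f U)° `&` f @` setT.
Proof.
move=> nbhsU; apply/seteqP; split=> [y [p Up <-]|y [int_y [p _ eq_y]]].
  by split; [exact: nbhsU|exists p].
by exists p => //; apply: (nbhs_singleton int_y).
Qed.

Lemma ultra_finite_fiber (T : Type) (I : eqType) (F : set_system T) (g : T -> I)
    (s : seq I) :
  UltraFilter F -> F [set q | g q \in s] -> exists2 i, i \in s & F [set q | g q = i].
Proof.
move=> FU; have PF := @ultra_proper _ F FU; elim: s => [|i s IH] Fs.
  by exfalso; apply: (@filter_not_empty _ F); apply: filterS Fs => q.
have [Fi|Fni] := in_ultra_setVsetC [set q | g q = i] FU; first by exists i; rewrite ?mem_head.
have [j js Fj] : exists2 j, j \in s & F [set q | g q = j].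
  apply: IH; apply: filterS (filterI Fs Fni) => q [] /=.
  by rewrite in_cons => /orP [/eqP|//].
by exists j; rewrite // in_cons js orbT.
Qed.

Lemma ultra_bounded_cut (T : Type) (R : realType) (F : set_system T) (g : T -> R)
    (a b : R) :
  UltraFilter F -> (forall q, a <= g q <= b) ->
  exists2 x, a <= x <= b &
    (forall y, y < x -> F [set q | y < g q]) /\ (forall y, x < y -> F [set q | g q < y]).
Proof.
move=> FU gab; have PF := @ultra_proper _ F FU; set A := [set y | F [set q | y <= g q]].
have Aa : A a by apply: filterS filterT => q _; have /andP [] := gab q.
have Ab : ubound A b.
  move=> y Ay; rewrite leNgt; apply/negP => lt_by; apply: (@filter_not_empty _ F).
  by apply: filterS Ay => q /=; have /andP [_] := gab q; lra.
have supA : has_sup A by split; [exists a|exists b].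
exists (sup A); first by apply/andP; split; [apply: sup_upper_bound|apply: ge_sup => //; exists a].
split=> y.
  by move=> /(sup_gt (ex_intro _ a Aa)) [z Az lt_yz]; apply: filterS Az => q /=; lra.
move=> lt_supy; have [Fy|] := in_ultra_setVsetC [set q | y <= g q] FU.
  by have := sup_upper_bound supA Fy; lra.
by apply: filterS => q /= /negP; rewrite -ltNge.
Qed.

Section Dyadic.
Variable R : realType.

Definition half_pow (m : nat) : R := (2 ^+ m)^-1.

Lemma half_pow_gt0 m : 0 < half_pow m.
Proof. by rewrite invr_gt0 exprn_gt0. Qed.

Lemma half_pow0 : half_pow 0 = 1.
Proof. by rewrite /half_pow expr0 invr1. Qed.

Lemma half_powSS m : half_pow m.+1 + half_pow m.+1 = half_pow m.
Proof. by rewrite /half_pow exprS invfM; field; rewrite expf_neq0 ?pnatr_eq0. Qed.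

Lemma half_pow_nonincreasing m k : (m <= k)%N -> half_pow k <= half_pow m.
Proof.
move=> /subnK <-; elim: (k - m)%N => [|j IH]; first by rewrite add0n.
rewrite addSn; apply: le_trans IH.
by have := half_powSS (j + m); have := half_pow_gt0 (j + m).+1; lra.
Qed.

Lemma half_pow_lt (e : R) : 0 < e -> exists m, half_pow m < e.
Proof.
move=> e0; have [m lt_m] : exists m : nat, e^-1 < m%:R.
  by exists (Num.truncn e^-1).+1; rewrite truncnS_gt.
exists m; have le_exp : (m%:R : R) <= 2 ^+ m by rewrite -natrX ler_nat ltnW // ltn_expl.
rewrite /half_pow -(invrK e) ltf_pV2 ?posrE ?exprn_gt0 ?invr_gt0 //.
exact: lt_le_trans lt_m le_exp.
Qed.

Lemma le_half_pow (a b : R) : (forall m, a <= b + half_pow m) -> a <= b.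
Proof.
move=> le_ab; rewrite leNgt; apply/negP => lt_ba.
have [m lt_m] : exists m, half_pow m < a - b by apply: half_pow_lt; rewrite subr_gt0.
by have := le_ab m; lra.
Qed.

Definition dyadic_sum (t : nat -> nat) (m : nat) : R :=
  \sum_(k < m) (if (0 < t k)%N then half_pow k.+1 else 0).

Lemma dyadic_sum0 t : dyadic_sum t 0 = 0.
Proof. by rewrite /dyadic_sum big_ord0. Qed.

Lemma dyadic_sumS t m :
  dyadic_sum t m.+1 = dyadic_sum t m + (if (0 < t m)%N then half_pow m.+1 else 0).
Proof. by rewrite /dyadic_sum big_ord_recr. Qed.

Lemma dyadic_sum_nested t m k : (m <= k)%N ->
  dyadic_sum t m <= dyadic_sum t k /\
  dyadic_sum t k + half_pow k <= dyadic_sum t m + half_pow m.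
Proof.
move=> /subnK <-; elim: (k - m)%N => [|j [IH1 IH2]]; first by rewrite add0n.
rewrite addSn dyadic_sumS; have := half_powSS (j + m); have := half_pow_gt0 (j + m).+1.
by case: ifP => _; split; lra.
Qed.

Lemma dyadic_sum_le1 t m : dyadic_sum t m + half_pow m <= 1.
Proof. by have [_] := dyadic_sum_nested t (leq0n m); rewrite dyadic_sum0 half_pow0 add0r. Qed.

Definition dyadic_value (t : nat -> nat) : R := sup (range (dyadic_sum t)).

Lemma has_sup_dyadic_sum t : has_sup (range (dyadic_sum t)).
Proof.
split; first by exists (dyadic_sum t 0), 0%N.
exists 1 => _ [m _ <-]; have := dyadic_sum_le1 t m; have := half_pow_gt0 m; lra.
Qed.

Lemma dyadic_sum_le_value t m : dyadic_sum t m <= dyadic_value t.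
Proof. by apply: sup_upper_bound; [exact: has_sup_dyadic_sum|exists m]. Qed.

Lemma dyadic_value_le_sum t m : dyadic_value t <= dyadic_sum t m + half_pow m.
Proof.
apply: ge_sup; first by exists (dyadic_sum t 0), 0%N.
move=> _ [k _ <-]; have [km|mk] := leqP k m.
  have [le_km _] := dyadic_sum_nested t km; have := half_pow_gt0 m; lra.
have [_ le_mk] := dyadic_sum_nested t (ltnW mk); have := half_pow_gt0 k; lra.
Qed.

Lemma dyadic_value_bounds t : 0 <= dyadic_value t <= 1.
Proof.
have := dyadic_sum_le_value t 0; have := dyadic_value_le_sum t 0.
by rewrite dyadic_sum0 half_pow0 add0r => ? ?; apply/andP.
Qed.

Fixpoint greedy_rem (s : R) (k : nat) : R :=
  if k is k'.+1 then
    if half_pow k <= greedy_rem s k' then greedy_rem s k' - half_pow k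
    else greedy_rem s k'
  else s.

Definition greedy_digits (s : R) : nat -> nat :=
  fun k => if half_pow k.+1 <= greedy_rem s k then 1%N else 0%N.

Lemma greedy_remP s k : 0 <= s <= 1 ->
  [/\ 0 <= greedy_rem s k, greedy_rem s k <= half_pow k
    & dyadic_sum (greedy_digits s) k + greedy_rem s k = s].
Proof.
move=> /andP [s0 s1]; elim: k => [|k [rem0 rem_le rem_sum]].
  by rewrite /= half_pow0 dyadic_sum0 add0r.
rewrite /= dyadic_sumS /greedy_digits; have := half_powSS k.
by case: ifP => take_digit /=; split; lra.
Qed.

Lemma dyadic_value_greedy s : 0 <= s <= 1 -> dyadic_value (greedy_digits s) = s.
Proof.
move=> s01; apply/eqP; rewrite eq_le; apply/andP.
split; apply: le_half_pow => m; have [rem0 rem_le rem_sum] := greedy_remP m s01.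
- by have := dyadic_value_le_sum (greedy_digits s) m; lra.
- by have := dyadic_sum_le_value (greedy_digits s) m; lra.
Qed.

Lemma dyadic_sum_near (t : baire_space) m :
  \forall u \near t, dyadic_sum u m = dyadic_sum t m.
Proof.
have digit_near k : \forall u \near t, u k = t k.
  have /(pointwise_cvgP _ _)/(_ k) : {ptws, nbhs t --> t} by [].
  by move=> cvg_k; apply: (cvg_k [set t k]).
elim: m => [|m IH]; first by apply: filterE => u; rewrite !dyadic_sum0.
apply: filterS (filterI IH (digit_near m)) => u [eq_sum eq_digit].
by rewrite !dyadic_sumS eq_sum eq_digit.
Qed.

End Dyadic.

Arguments half_pow {R}.
Arguments dyadic_sum {R}.
Arguments dyadic_value {R}.

Section Jump.
Variable R : realType.
Implicit Types (x y s : R) (i j : nat).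

Definition jump x i s : R := if s < x then 1 else if s == x then i%:R else 0.

Lemma jump_lt x i s : s < x -> jump x i s = 1.
Proof. by rewrite /jump => ->. Qed.

Lemma jump_gt x i s : x < s -> jump x i s = 0.
Proof. by move=> lt_xs; rewrite /jump ltNge (ltW lt_xs) gt_eqF. Qed.

Lemma jump_at x i : jump x i x = i%:R.
Proof. by rewrite /jump ltxx eqxx. Qed.

Lemma jump_eq0 y j s : jump y j s = 0 <-> y < s \/ (y = s /\ j = 0%N).
Proof.
rewrite /jump; case: ltgtP => [lt_sy|lt_ys|<-].
- by split=> [/eqP|]; [rewrite oner_eq0|case=> [|[]]; lra].
- by split=> // _; left.
- split=> [/eqP|]; first by rewrite pnatr_eq0 => /eqP ->; right.
  by case=> [|[_ ->]]; rewrite ?ltxx.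
Qed.

Lemma jump_eq1 y j s : jump y j s = 1 <-> s < y \/ (y = s /\ j = 1%N).
Proof.
rewrite /jump; case: ltgtP => [lt_sy|lt_ys|<-].
- by split=> // _; left.
- by split=> [/eqP|]; [rewrite eq_sym oner_eq0|case=> [|[]]; lra].
- split=> [/eqP|]; first by rewrite pnatr_eq1 => /eqP ->; right.
  by case=> [|[_ ->]]; rewrite ?ltxx.
Qed.

Lemma jump_eq_natr i y j s : (2 <= i)%N ->
  jump y j s = i%:R <-> y = s /\ j = i.
Proof.
move=> le2i; have i_neq0 : i%:R != 0 :> R by rewrite pnatr_eq0 -lt0n (leq_trans _ le2i).
have i_neq1 : i%:R != 1 :> R by rewrite pnatr_eq1; apply: contraTneq le2i => ->.
rewrite /jump; case: ltgtP => [lt_sy|lt_ys|<-].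
- by split=> [/esym/eqP|[]]; [rewrite (negPf i_neq1)|lra].
- by split=> [/esym/eqP|[]]; [rewrite (negPf i_neq0)|lra].
- by split=> [/eqP|[_ ->]] //; rewrite eqr_nat => /eqP.
Qed.

Lemma jump_natr_window i y j s :
  i%:R - 1/2 < jump y j s < i%:R + 1/2 <-> jump y j s = i%:R.
Proof.
split=> [|->]; last by apply/andP; split; lra.
rewrite /jump; case: ifP => _; last case: ifP => _.
- by move=> /(@natr_window R i 1%N) <-.
- by move=> /natr_window <-.
- by move=> /(@natr_window R i 0%N) <-.
Qed.

Lemma left_ray_jump x z y j : z < x ->
  (y = x /\ j = 0%N) \/ (z < y /\ y < x) <->
  jump y j x = 0 /\ exists2 u, z < u < x & jump y j u = 1.
Proof.
move=> lt_zx; rewrite jump_eq0; split.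
- case=> [[-> ->]|[lt_zy lt_yx]]; split; [by right| |by left|].
  + by exists ((z + x) / 2); [apply/andP; split|apply: jump_lt]; lra.
  + by exists ((z + y) / 2); [apply/andP; split|apply: jump_lt]; lra.
- case=> [[lt_yx|[-> ->]]] [u /andP [lt_zu lt_ux] /jump_eq1 le_uy]; last by left.
  by right; split=> //; case: le_uy => [|[]]; lra.
Qed.

Lemma right_ray_jump x z y j : x < z ->
  (y = x /\ j = 1%N) \/ (x < y /\ y < z) <->
  jump y j x = 1 /\ exists2 u, x < u < z & jump y j u = 0.
Proof.
move=> lt_xz; rewrite jump_eq1; split.
- case=> [[-> ->]|[lt_xy lt_yz]]; split; [by right| |by left|].
  + by exists ((x + z) / 2); [apply/andP; split|apply: jump_gt]; lra.
  + by exists ((y + z) / 2); [apply/andP; split|apply: jump_gt]; lra.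
- case=> [[lt_xy|[-> ->]]] [u /andP [lt_xu lt_uz] /jump_eq0 le_yu]; last by left.
  by right; split=> //; case: le_yu => [|[]]; lra.
Qed.

Lemma jump_left_ray_const x s : 0 <= s -> 0 < x ->
  exists2 z, 0 <= z < x &
    forall y j, (y = x /\ j = 0%N) \/ (z < y /\ y < x) -> jump y j s = jump x 0 s.
Proof.
move=> s0 x0; have [lt_sx|le_xs] := ltrP s x.
- exists s; first by apply/andP.
  by move=> y j [[-> ->] //|[lt_sy _]]; rewrite !jump_lt.
- exists 0; first by rewrite lexx.
  move=> y j [[-> ->] //|[_ lt_yx]]; rewrite jump_gt; last lra.
  by apply/esym/jump_eq0; move: le_xs; rewrite le_eqVlt => /orP [/eqP|]; [right|left].
Qed.

Lemma jump_right_ray_const x s : s <= 1 -> x < 1 ->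
  exists2 z, x < z <= 1 &
    forall y j, (y = x /\ j = 1%N) \/ (x < y /\ y < z) -> jump y j s = jump x 1 s.
Proof.
move=> s1 x1; have [lt_xs|le_sx] := ltrP x s.
- exists s; first by apply/andP.
  by move=> y j [[-> ->] //|[_ lt_ys]]; rewrite !jump_gt.
- exists 1; first by rewrite lexx andbT.
  move=> y j [[-> ->] //|[lt_xy _]]; rewrite jump_lt; last lra.
  by apply/esym/jump_eq1; move: le_sx; rewrite le_eqVlt => /orP [/eqP|]; [right|left].
Qed.

End Jump.

Section BaireOne.
Variable R : realType.

(* Reads [jump x i] off the dyadic interval
   [dyadic_sum t m, dyadic_sum t m + half_pow m], which contains [dyadic_value t]. *)
Definition jump_approx (m : nat) (x : R) (i : nat) (t : nat -> nat) : R :=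
  if dyadic_sum t m + half_pow m < x then 1
  else if (dyadic_sum t m <= x) && (x <= dyadic_sum t m + half_pow m) then i%:R
  else 0.

Lemma jump_approx_eventually x i t :
  \forall m \near \oo, jump_approx m x i t = jump x i (dyadic_value t).
Proof.
have lb := dyadic_sum_le_value R t; have ub := dyadic_value_le_sum R t.
have mono := @half_pow_nonincreasing R.
rewrite /jump_approx; have [lt_vx|lt_xv|<-] := ltgtP (dyadic_value t) x.
- have [M lt_M] : exists M, half_pow M < x - dyadic_value t.
    by apply: half_pow_lt; rewrite subr_gt0.
  exists M => // m /= /mono le_m; rewrite jump_lt //.
  by have := lb m; case: ifP => // /negbT; rewrite -leNgt; lra.
- have [M lt_M] : exists M, half_pow M < dyadic_value t - x.
    by apply: half_pow_lt; rewrite subr_gt0.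
  exists M => // m /= /mono le_m; rewrite jump_gt //.
  have := lb m; have := ub m; case: ifP => [|_]; first lra.
  by case: ifP => // /andP; lra.
- exists 0%N => // m _; rewrite jump_at.
  have := lb m; have := ub m; case: ifP => [|_]; first lra.
  by case: ifP => // /negbT; rewrite negb_and -!ltNge; lra.
Qed.

Lemma jump_approx_continuous m x i : continuous (jump_approx m x i : baire_space -> R).
Proof.
move=> t W /= /nbhs_singleton Wt.
by apply: filterS (dyadic_sum_near R t m) => u eq_u; rewrite /= /jump_approx eq_u.
Qed.

Lemma baire_one_jump_dyadic x i :
  @baire_one R (fun t : baire_space => jump x i (dyadic_value t)).
Proof.
exists (fun m => jump_approx m x i); split=> [m|t]; first exact: jump_approx_continuous.
by apply: cvg_near_cst; apply: jump_approx_eventually.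
Qed.

End BaireOne.

Section SplitEmbedding.
Variables (R : realType) (n : nat).
Local Notation X := (split_interval R n).
Local Notation P := (ptws_RBaire R).

Lemma Iunit_bounds (x : Iunit R) : 0 <= sval x <= 1.
Proof. exact: svalP x. Qed.

Definition split_embed (p : X) : P :=
  fun t => jump (sval p.1) (val p.2) (dyadic_value t).

Lemma split_embed_greedy (p : X) s : 0 <= s <= 1 ->
  split_embed p (greedy_digits s) = jump (sval p.1) (val p.2) s.
Proof. by move=> s01; rewrite /split_embed dyadic_value_greedy. Qed.

Lemma split_embed_inj : injective split_embed.
Proof.
move=> [[x x01] i] [[y y01] j] eq_embed.
have eq_jump s : 0 <= s <= 1 -> jump x i s = jump y j s.
  move=> s01; have := congr1 (fun g : P => g (greedy_digits s)) eq_embed.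
  by rewrite /= !split_embed_greedy.
have /andP [x0 x1] := x01; have /andP [y0 y1] := y01.
have mid01 : 0 <= (x + y) / 2 <= 1 by apply/andP; split; lra.
have [lt_xy|lt_yx|eq_xy] := ltgtP x y.
- by exfalso; have := eq_jump _ mid01; rewrite jump_gt ?jump_lt; lra.
- by exfalso; have := eq_jump _ mid01; rewrite jump_lt ?jump_gt; lra.
- subst y; have /eqP := eq_jump x x01; rewrite !jump_at eqr_nat => /eqP eq_ij.
  by congr pair; apply: val_inj.
Qed.

Lemma open_eval (t : baire_space) (O : set R) : open O -> open [set g : P | O (g t)].
Proof.
move=> oO; apply: (@open_comp _ _ (fun g : P => g t)) => // g _.
by have /(pointwise_cvgP _ _) := @cvg_id _ (nbhs g); apply.
Qed.

Definition value_window (s : R) (i : nat) : set P :=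
  [set g | i%:R - 1/2 < g (greedy_digits s) < i%:R + 1/2].

Lemma open_value_window s i : open (value_window s i).
Proof.
apply: (@open_eval _ [set a | i%:R - 1/2 < a < i%:R + 1/2]).
rewrite (_ : [set a : R | _ < a < _] = [set a | i%:R - 1/2 < a] `&` [set a | a < i%:R + 1/2]).
  by apply: openI; [apply: open_gt|apply: open_lt].
by apply/seteqP; split=> a /=; [move/andP|move=> [-> ->]].
Qed.

Lemma split_embed_window q s i : 0 <= s <= 1 ->
  value_window s i (split_embed q) <-> jump (sval q.1) (val q.2) s = i%:R.
Proof. by move=> s01; rewrite /value_window /= split_embed_greedy // jump_natr_window. Qed.

Lemma split_embed_windows (A : set R) i q : A `<=` [set s | 0 <= s <= 1] ->
  (\bigcup_(u in A) value_window u i) (split_embed q) <->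
  exists2 u, A u & jump (sval q.1) (val q.2) u = i%:R.
Proof.
by move=> A01; split=> -[u Au]; move/(split_embed_window _ _ (A01 _ Au)); exists u.
Qed.

Lemma Iunit_val_eq (a b : Iunit R) : sval a = sval b <-> a = b.
Proof. by split=> [|->]; [apply: val_inj|]. Qed.

Lemma split_basic_preimage (S : set X) : Split_basic S ->
  exists2 V : set P, open V & split_embed @^-1` V = S.
Proof.
case=> [[x [i [le2i ->]]]|[[x [z [x0 [z0 [lt_zx ->]]]]]|
        [[x [z [x1 [z1 [lt_xz ->]]]]]|[->|->]]]].
- have x01 := Iunit_bounds x.
  exists (value_window (sval x) i); first exact: open_value_window.
  rewrite predeqE => q /=; rewrite split_embed_window // jump_eq_natr // Iunit_val_eq.
  by split=> [[<- /val_inj <-]|->]; [case: q|].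
- have x01 := Iunit_bounds x.
  exists (value_window (sval x) 0 `&` \bigcup_(u in [set u | z < u < sval x]) value_window u 1).
    by apply: openI; [|apply: bigcup_open => u _]; apply: open_value_window.
  rewrite predeqE => q /=; rewrite split_embed_window // split_embed_windows; last first.
    by move=> u /andP [zu ux]; apply/andP; split; lra.
  by rewrite -left_ray_jump // Iunit_val_eq.
- have x01 := Iunit_bounds x.
  exists (value_window (sval x) 1 `&` \bigcup_(u in [set u | sval x < u < z]) value_window u 0).
    by apply: openI; [|apply: bigcup_open => u _]; apply: open_value_window.
  rewrite predeqE => q /=; rewrite split_embed_window // split_embed_windows; last first.
    by move=> u /andP [xu uz]; apply/andP; split; lra.
  by rewrite -right_ray_jump // Iunit_val_eq.
- exists (value_window 0 0); first exact: open_value_window.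
  rewrite predeqE => q /=; rewrite split_embed_window ?lexx ?ler01 // jump_eq0.
  have /andP [q0 q1] := Iunit_bounds q.1.
  by split=> [[lt_q|//]|eq_q]; [exfalso; lra|right].
- exists (value_window 1 1); first exact: open_value_window.
  rewrite predeqE => q /=; rewrite split_embed_window ?lexx ?ler01 // jump_eq1.
  have /andP [q0 q1] := Iunit_bounds q.1.
  by split=> [[lt_q|//]|eq_q]; [exfalso; lra|right].
Qed.

End SplitEmbedding.

Section SplitTopology.
Variables (R : realType) (n : nat).
Local Notation X := (split_interval R n).
Local Notation P := (ptws_RBaire R).
Local Notation embed := (@split_embed R n).

Lemma split_basic_open (S : set X) : Split_basic S -> open S.
Proof.
move=> basicS; exists [set S]; last by rewrite bigcup_set1.
by move=> _ ->; exact: (@finI_from1 _ _ (@Split_basic R n) id).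
Qed.

Lemma split_nbhs_basic (p : X) (U : set X) : nbhs p U ->
  exists D : {fset set X}, [/\ {subset D <= @Split_basic R n},
    (forall S, S \in D -> S p) & \bigcap_(S in [set` D]) S `<=` U].
Proof.
case=> B [[I I_from <-] [W IW Wp] IU]; have [D Dbasic eqW] := I_from _ IW.
exists D; split=> //; first by move=> S SD; move: Wp; rewrite -eqW; apply.
by move=> q Dq; apply: IU; exists W => //; rewrite -eqW.
Qed.

Lemma nbhs_small_image_split_embed (p : X) (U : set X) : nbhs p U ->
  nbhs (embed p) (small_image embed U).
Proof.
move=> /split_nbhs_basic [D [Dbasic Dp DU]].
have nbhs_basic S : S \in D -> nbhs (embed p) (small_image embed S).
  move=> SD; have [V oV eqV] := split_basic_preimage (set_mem (Dbasic _ SD)).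
  have Vp : V (embed p) by rewrite -[V _]/((embed @^-1` V) p) eqV; apply: Dp.
  by apply: filterS (open_nbhs_nbhs (conj oV Vp)) => g Vg q eq_g; rewrite -eqV /= eq_g.
apply: filterS (filter_bigI _ nbhs_basic) => g small_g q eq_g.
by apply: DU => S SD; apply: small_g.
Qed.

Lemma split_embed_open (U : set X) : open U ->
  exists V : set P, open V /\ embed @` U = V `&` embed @` setT.
Proof.
move=> oU; exists (small_image embed U)°; split; first exact: open_interior.
apply: image_small_image_interior => p Up.
by apply: nbhs_small_image_split_embed; apply: open_nbhs_nbhs.
Qed.

End SplitTopology.

Section SplitContinuity.
Variables (R : realType) (n : nat).
Local Notation X := (split_interval R n).

Lemma split_jump_locally_constant (p : X) s : 0 <= s <= 1 ->
  exists S, [/\ @Split_basic R n S, S p &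
    forall q, S q -> jump (sval q.1) (val q.2) s = jump (sval p.1) (val p.2) s].
Proof.
move=> /andP [s0 s1]; case: p => x j /=; have /andP [x0 x1] := Iunit_bounds x.
have [j0|[j1|le2j]] : (val j = 0 \/ val j = 1 \/ 2 <= val j)%N by lia.
- have [lt0x|le_x0] := ltrP 0 (sval x); last first.
    have x_eq0 : sval x = 0 by apply: le_anti; rewrite le_x0.
    exists [set q : X | sval q.1 = 0 /\ val q.2 = 0%N]; split=> //; first by do 3 right; left.
    by move=> q [-> ->]; rewrite x_eq0 j0.
  have [z /andP [z0 lt_zx] const_z] := jump_left_ray_const s0 lt0x.
  exists [set q : X | (q.1 = x /\ val q.2 = 0%N) \/ (z < sval q.1 /\ sval q.1 < sval x)].
  split; [by right; left; exists x, z|by left|].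
  by move=> q [[-> eq_q]|lt_q]; rewrite j0 const_z //; [left|right].
- have [lt_x1|le1x] := ltrP (sval x) 1; last first.
    have x_eq1 : sval x = 1 by apply: le_anti; rewrite le1x x1.
    exists [set q : X | sval q.1 = 1 /\ val q.2 = 1%N]; split=> //; first by do 4 right.
    by move=> q [-> ->]; rewrite x_eq1 j1.
  have [z /andP [lt_xz z1] const_z] := jump_right_ray_const s1 lt_x1.
  exists [set q : X | (q.1 = x /\ val q.2 = 1%N) \/ (sval x < sval q.1 /\ sval q.1 < z)].
  split; [by right; right; left; exists x, z|by left|].
  by move=> q [[-> eq_q]|lt_q]; rewrite j1 const_z //; [left|right].
- by exists [set (x, j)]; split=> [|//|q ->//]; left; exists x, j.
Qed.

Lemma split_embed_continuous : continuous (@split_embed R n).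
Proof.
move=> p; have embed_filter : Filter (@split_embed R n @ nbhs p) by apply: fmap_filter.
apply/(pointwise_cvgP _ embed_filter) => t W /= /nbhs_singleton Wp.
have [S [basicS Sp constS]] := split_jump_locally_constant p (dyadic_value_bounds R t).
apply: filterS (open_nbhs_nbhs (conj (split_basic_open basicS) Sp)) => q Sq.
by rewrite /= /split_embed constS.
Qed.

End SplitContinuity.

Section SplitCompact.
Variables (R : realType) (n : nat).
Local Notation X := (split_interval R n).

Lemma cvg_split_basic (F : set_system X) (p : X) : Filter F ->
  (forall S, Split_basic S -> S p -> F S) -> F --> p.
Proof.
move=> FF basicF U /split_nbhs_basic [D [Dbasic Dp DU]]; apply: filterS DU _.
by apply: filter_bigI => S SD; apply: basicF; [exact: set_mem (Dbasic _ SD)|exact: Dp].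
Qed.

Lemma cvg_split_left (F : set_system X) (p : X) : Filter F -> val p.2 = 0%N ->
  F [set q | sval q.1 < sval p.1] -> (forall y, y < sval p.1 -> F [set q | y < sval q.1]) ->
  F --> p.
Proof.
move=> FF p0 F_lt F_gt; apply: cvg_split_basic => S.
case=> [[x [i [le2i ->]]]|[[x [z [x0 [z0 [lt_zx ->]]]]]|
        [[x [z [x1 [z1 [lt_xz ->]]]]]|[->|->]]]] /=.
- by move=> eq_p; rewrite eq_p /= in p0; rewrite p0 in le2i.
- move=> Sp; have [lt_zp le_px] : z < sval p.1 /\ sval p.1 <= sval x.
    by case: Sp => [[-> _]|[]]; split; lra.
  by apply: filterS (filterI (F_gt _ lt_zp) F_lt) => q [] /= *; right; split; lra.
- case=> [[_]|[lt_xp lt_pz]]; first by rewrite p0.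
  by apply: filterS (filterI (F_gt _ lt_xp) F_lt) => q [] /= *; right; split; lra.
- move=> [p_0 _]; apply: filterS F_lt => q /=; rewrite p_0.
  by have /andP [q0 _] := Iunit_bounds q.1 => /(le_lt_trans q0); rewrite ltxx.
- by move=> [_]; rewrite p0.
Qed.

Lemma cvg_split_right (F : set_system X) (p : X) : Filter F -> val p.2 = 1%N ->
  F [set q | sval p.1 < sval q.1] -> (forall y, sval p.1 < y -> F [set q | sval q.1 < y]) ->
  F --> p.
Proof.
move=> FF p1 F_gt F_lt; apply: cvg_split_basic => S.
case=> [[x [i [le2i ->]]]|[[x [z [x0 [z0 [lt_zx ->]]]]]|
        [[x [z [x1 [z1 [lt_xz ->]]]]]|[->|->]]]] /=.
- by move=> eq_p; rewrite eq_p /= in p1; rewrite p1 in le2i.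
- case=> [[_]|[lt_zp lt_px]]; first by rewrite p1.
  by apply: filterS (filterI F_gt (F_lt _ lt_px)) => q [] /= *; right; split; lra.
- move=> Sp; have [le_xp lt_pz] : sval x <= sval p.1 /\ sval p.1 < z.
    by case: Sp => [[-> _]|[]]; split; lra.
  by apply: filterS (filterI F_gt (F_lt _ lt_pz)) => q [] /= *; right; split; lra.
- by move=> [_]; rewrite p1.
- move=> [p_1 _]; apply: filterS F_gt => q /=; rewrite p_1.
  by have /andP [_ q1] := Iunit_bounds q.1 => /lt_le_trans/(_ q1); rewrite ltxx.
Qed.

Lemma split_interval_compact : (1 < n)%N -> compact [set: X].
Proof.
move=> n_gt1; rewrite compact_ultra => F FU _; have PF := @ultra_proper _ F FU.
have [x x01 [F_gt F_lt]] := ultra_bounded_cut FU (fun q : X => Iunit_bounds q.1).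
pose x' : Iunit R := exist _ x x01.
have [F_left|F_ge] := in_ultra_setVsetC [set q : X | sval q.1 < x] FU.
  by exists (x', Ordinal (ltnW n_gt1)); split=> //; apply: cvg_split_left.
have [F_right|F_le] := in_ultra_setVsetC [set q : X | x < sval q.1] FU.
  by exists (x', Ordinal n_gt1); split=> //; apply: cvg_split_right.
have F_eq : F [set q : X | q.1 = x'].
  apply: filterS (filterI F_ge F_le) => q /= [/negP ge_q /negP le_q].
  by apply/val_inj/le_anti; rewrite -!leNgt in ge_q le_q; rewrite /= ge_q le_q.
have F_enum : F [set q : X | q.2 \in enum 'I_n].
  by apply: filterS filterT => q _ /=; rewrite mem_enum.
have [i _ F_i] := ultra_finite_fiber FU F_enum.
exists (x', i); split=> // U /nbhs_singleton U_x'i.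
by apply: filterS (filterI F_eq F_i) => -[y j] /= [-> ->].
Qed.

End SplitCompact.

Theorem mainTheorem5 (R : realType) (n : nat) (hn : (2 <= n)%N) :
  rosenthal_compactum R (split_interval R n).
Proof.
exists ((@split_embed R n) @` setT), (@split_embed R n); split=> //.
- by move=> _ [p _ <-]; apply: baire_one_jump_dyadic.
- apply: continuous_compact; last exact: split_interval_compact.
  by apply: continuous_subspaceT; exact: split_embed_continuous.
- split; [exact: split_embed_inj|exact: split_embed_continuous|exact: split_embed_open].
Qed.
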